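(* For every positive integer $n$, $b'_n\equiv 0\pmod 2$ and $b''_n\equiv 0\pmod 5$.
   Context: For $m\in\mathbb{N}$, $b_m=\sum_{k=0}^m\binom{m}{k}^2\binom{m+k}{k}$ (Apéry numbers). For a sequence $(x_k)_{k\ge0}$, its binomial transform is $x'_n=\sum_{k=0}^n\binom{n}{k}x_k$; thus $b'_n=\sum_{k=0}^n\binom nk b_k$ and $b''_n=\sum_{k=0}^n\binom{n}{k}b'_k$. *)

From mathcomp Require Import all_boot.
Set Implicit Arguments. Unset Strict Implicit. Unset Printing Implicit Defensive.

Definition apery (m : nat) : nat :=
  \sum_(0 <= k < m.+1) 'C(m, k) ^ 2 * 'C(m + k, k).

(* binomial transform x'_n = sum_{k=0}^n C(n,k) x_k *)
Definition binom_transform (x : nat -> nat) (n : nat) : nat :=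
  \sum_(0 <= k < n.+1) 'C(n, k) * x k.

Definition apery1 := binom_transform apery.
Definition apery2 := binom_transform apery1.

(* A sequence x has the Lucas property mod p when x(pa + r) = x(a) x(r) mod p
   for every digit r < p; by Lucas' theorem on binomial coefficients, the sums
   over k of C(n,k)^2 C(n+k,k) and of C(n,k) x_k inherit this property digit by
   digit, so it holds for b, b' and b'' and every prime p.  A Lucas sequence
   vanishing mod p at 1, ..., p-1 vanishes at every n > 0, and one checks
   directly that 2 | b'_1 and 5 | b''_1, ..., b''_4. *)

From mathcomp Require Import all_boot all_algebra zify ring.
Import GRing.Theory.

Lemma big_nat_mul_digits (R : nmodType) p n (G : nat -> R) :
  (\sum_(0 <= k < p * n) G k
   = \sum_(0 <= c < n) \sum_(0 <= s < p) G (p * c + s)%N)%R.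
Proof.
rewrite mulnC big_nat_mul; apply: eq_bigr => c _.
rewrite -{1}[c * p]add0n big_addn mulSn addnK.
by apply: eq_bigr => s _; rewrite addnC mulnC.
Qed.

Lemma big_nat_widen_vanishing (R : nmodType) n N (G : nat -> R) :
  (n <= N)%N -> (forall k, (n <= k)%N -> G k = 0%R) ->
  (\sum_(0 <= k < n) G k = \sum_(0 <= k < N) G k)%R.
Proof.
move=> leN G0; rewrite [RHS](@big_cat_nat _ _ _ n) //=.
rewrite [X in (_ + X)%R]big_nat_cond.
by rewrite [X in (_ + X)%R]big1 ?addr0 // => k /andP[/andP[/G0]].
Qed.

Section LucasCongruences.

Variable p : nat.
Hypothesis p_prime : prime p.

Local Notation "n %:F" := (GRing.natmul (1 : 'F_p)%R n) (format "n %:F").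

Lemma natFp_eq0 n : (n%:F == 0)%R = (p %| n).
Proof. by rewrite (dvdn_pcharf (pchar_Fp p_prime)). Qed.

Lemma binFp_addp l i :
  'C(p + l, i)%:F = ('C(l, i)%:F + (if (p <= i)%N then 'C(l, i - p)%:F else 0))%R.
Proof.
have p_gt0 := prime_gt0 p_prime.
rewrite -binomial.Vandermonde natr_sum.
rewrite (eq_bigr (fun j : 'I_i.+1 => (if j == 0 :> nat then 'C(l, i)%:F else 0)
   + (if j == p :> nat then 'C(l, i - p)%:F else 0))%R); last first.
  move=> [j lt_ji] _ /=; rewrite natrM.
  case: (posnP j) => [->|j_gt0].
    by rewrite bin0 subn0 mul1r /= eq_sym gtn_eqF // addr0.
  rewrite add0r; case: (ltngtP j p) => [lt_jp|lt_pj|->].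
  - have /eqP-> : ('C(p, j)%:F == 0)%R by rewrite natFp_eq0 prime_dvd_bin ?j_gt0.
    by rewrite mul0r.
  - by rewrite bin_small // mul0r.
  - by rewrite binn mul1r.
by rewrite big_split /= -!big_mkcond !(big_ord1_eq _ (fun=> _)) ltnS.
Qed.

Lemma lucas_bin a c r s : (r < p)%N -> (s < p)%N ->
  'C(p * a + r, p * c + s)%:F = ('C(a, c)%:F * 'C(r, s)%:F)%R.
Proof.
move=> lt_rp lt_sp; elim: a c => [|a IHa] [|c].
- by rewrite !muln0 !add0n bin0 mul1r.
- by rewrite muln0 add0n bin0n mul0r bin_small // mulnS; lia.
- rewrite mulnSr -addnA addnCA binFp_addp IHa muln0 add0n leqNgt lt_sp.
  by rewrite addr0 !bin0.
have le_p : (p <= p * c.+1 + s)%N by rewrite mulnSr; lia.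
rewrite mulnSr -addnA addnCA binFp_addp le_p.
have -> : (p * c.+1 + s - p = p * c + s)%N by rewrite mulnSr; lia.
by rewrite !IHa binS natrD mulrDl addrC.
Qed.

Lemma lucas_bin_carry m c r s : (r < p)%N -> (s < p)%N ->
  'C(p * m + (r + s), p * c + s)%:F = ('C(m, c)%:F * 'C(r + s, s)%:F)%R.
Proof.
move=> lt_rp lt_sp.
case: (ltnP (r + s) p) => [lt_rsp|le_p]; first exact: lucas_bin.
(* If r + s carries, both sides vanish: the low digit r + s - p is below s. *)
have lt_tp : (r + s - p < p)%N by lia.
have lt_ts : (r + s - p < s)%N by lia.
have bin_rs : 'C(r + s, s)%:F = 0%R.
  have := @lucas_bin 1 0 _ _ lt_tp lt_sp.
  by rewrite muln1 muln0 add0n subnKC // (bin_small lt_ts) mulr0.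
have -> : (p * m + (r + s) = p * m.+1 + (r + s - p))%N by rewrite mulnSr; lia.
by rewrite lucas_bin // (bin_small lt_ts) bin_rs !mulr0.
Qed.

Definition lucas_seq (x : nat -> nat) :=
  forall a r, (r < p)%N -> (x (p * a + r))%:F = ((x a)%:F * (x r)%:F)%R.

Definition lucas_kernel (F : nat -> nat -> nat) :=
  forall a c r s, (r < p)%N -> (s < p)%N ->
  (F (p * a + r) (p * c + s))%:F = ((F a c)%:F * (F r s)%:F)%R.

Lemma lucas_seq_sum_kernel F :
  lucas_kernel F -> (forall n k, (n < k)%N -> F n k = 0) ->
  lucas_seq (fun n => \sum_(0 <= k < n.+1) F n k).
Proof.
move=> F_lucas F_vanish a r lt_rp.
have sum_widen n N : (n < N)%N ->
    (\sum_(0 <= k < n.+1) (F n k)%:F = \sum_(0 <= k < N) (F n k)%:F)%R.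
  by move=> lt_nN; apply: big_nat_widen_vanishing => // k le_nk; rewrite F_vanish.
rewrite !natr_sum (sum_widen _ (p * a.+1)); last by rewrite mulnSr; lia.
rewrite big_nat_mul_digits (sum_widen r p) // big_distrl /=.
apply: eq_bigr => c _; rewrite big_distrr /=.
by apply: eq_big_nat => s /andP[_ lt_sp]; rewrite F_lucas.
Qed.

Lemma lucas_seq_apery : lucas_seq apery.
Proof.
apply: (@lucas_seq_sum_kernel (fun m k => 'C(m, k) ^ 2 * 'C(m + k, k)))
  => [a c r s lt_rp lt_sp|n k lt_nk].
  have -> : (p * a + r + (p * c + s) = p * (a + c) + (r + s))%N by lia.
  by rewrite !natrM lucas_bin // lucas_bin_carry //; ring.
by rewrite bin_small.
Qed.

Lemma lucas_seq_binom_transform x : lucas_seq x -> lucas_seq (binom_transform x).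
Proof.
move=> x_lucas.
apply: (@lucas_seq_sum_kernel (fun n k => 'C(n, k) * x k))
  => [a c r s lt_rp lt_sp|n k lt_nk].
  by rewrite !natrM lucas_bin // x_lucas //; ring.
by rewrite bin_small.
Qed.

Lemma lucas_seq_dvd x : lucas_seq x -> (forall r, (0 < r < p)%N -> p %| x r) ->
  forall n, (0 < n)%N -> p %| x n.
Proof.
move=> x_lucas x_digits n; elim/ltn_ind: n => n IHn n_gt0.
have p_gt1 := prime_gt1 p_prime.
have lt_mod : (n %% p < p)%N by rewrite ltn_mod; lia.
rewrite -natFp_eq0 (divn_eq n p) mulnC x_lucas //.
case: (posnP (n %% p)) => [mod0|mod_gt0].
  have div_gt0 : (0 < n %/ p)%N.
    by rewrite divn_gt0; [rewrite dvdn_leq // /dvdn mod0 | lia].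
  have /eqP-> : (x (n %/ p))%:F == 0%R :> 'F_p.
    by rewrite natFp_eq0 IHn // ltn_Pdiv.
  by rewrite mul0r.
have /eqP-> : (x (n %% p))%:F == 0%R :> 'F_p.
  by rewrite natFp_eq0 x_digits ?mod_gt0.
by rewrite mulr0.
Qed.

End LucasCongruences.

Theorem lemma4p1 (n : nat) : 0 < n ->
  apery1 n = 0 %[mod 2] /\ apery2 n = 0 %[mod 5].
Proof.
move=> n_gt0; rewrite !mod0n; split; apply/eqP.
- apply: (@lucas_seq_dvd 2) n_gt0 => //.
    exact/lucas_seq_binom_transform/lucas_seq_apery.
  by case=> [|[|r]] //; rewrite /apery1 /binom_transform /apery unlock.
- apply: (@lucas_seq_dvd 5) n_gt0 => //.
    exact/lucas_seq_binom_transform/lucas_seq_binom_transform/lucas_seq_apery.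
  by case=> [|[|[|[|[|r]]]]] //; rewrite /apery2 /apery1 /binom_transform
    /apery unlock.
Qed.
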